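(* In the setting described in the context (with any one of the three learning-rate setups (a), (b), (c)), there exist a deterministic constant $C$ and an integer $m_0$ such that for all $m\ge m_0$, $$\|z_{1,m}\|_m\le T_m^2\,C\,\big(\|w_{t_m}-w_*\|_m+1\big).$$
   Context: Setting. $\{Y_t\}_{t\ge0}$ is a Markov chain on a measurable space $\mathcal{Y}$ with transition kernel $P$ and unique stationary distribution $d_{\mathcal{Y}}$, with $\int|P^n(y,y')-d_{\mathcal{Y}}(y')|\,\mathrm{d}y'\le C_A\varrho^n$ for all $y,n$, some $\varrho\in[0,1)$. $H:\mathbb{R}^d\times\mathcal{Y}\to\mathbb{R}^d$, $h(w)=\mathbb{E}_{y\sim d_{\mathcal{Y}}}[H(w,y)]$; for some norm $\|\cdot\|$ and $\kappa\in[0,1)$, $\|h(w)-h(w')\|\le\kappa\|w-w'\|$, with fixed point $w_*$; $\|H(w,y)-H(w',y)\|\le L_h\|w-w'\|$ for all $w,w',y$ and $\sup_y\|H(0,y)\|<\infty$. Iterates: $w_0\in\mathbb{R}^d$, $w_{t+1}=w_t+\alpha_t(H(w_t,Y_{t+1})-w_t)$. Put $G(w,y)=H(w,y)-w$, $g(w)=h(w)-w$. Learning-rate setups with $C_\alpha>0$: (a) $\alpha_t=\frac{C_\alpha}{t+3}$, $T_m=\frac{C_\alpha\ln^{\nu_1}(m+3)}{m+3}$, $\nu_1\in(0,1)$; (b) $\alpha_t=\frac{C_\alpha}{(t+3)^\nu}$, $\nu\in(\frac23,1)$, $T_m=\frac{C_\alpha}{(m+3)^{\nu_2}}$, $\frac12<\nu_2<\frac\nu{2-\nu}$;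 (c) $\alpha_t=\frac{C_\alpha}{(t+3)\ln^\nu(t+3)}$, $\nu\in(0,1)$, $T_m=\frac{C_\alpha}{m+3}$. Anchors: $t_0=0$, $t_{m+1}=\min\{k:\sum_{t=t_m}^{k-1}\alpha_t\ge T_m\}$. Define $z_{1,m}=\sum_{t=t_m}^{t_{m+1}-1}\alpha_t\big(G(w_t,Y_{t+1})-G(w_{t_m},Y_{t+1})\big)$. The norm $\|\cdot\|_m$: fix a norm $\|\cdot\|_s$ such that $\frac12\|\cdot\|_s^2$ is smooth w.r.t. $\|\cdot\|_s$ and $\xi>0$; $\|\cdot\|_m$ is the norm with $\frac12\|w\|_m^2=\inf_u\{\frac12\|u\|^2+\frac1{2\xi}\|w-u\|_s^2\}$. *)

From HB Require Import structures.
From mathcomp Require Import all_boot all_order all_algebra.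
From mathcomp Require Import all_classical all_reals all_analysis.
Set Implicit Arguments. Unset Strict Implicit. Unset Printing Implicit Defensive.
Import Order.TTheory GRing.Theory Num.Theory.
Import numFieldNormedType.Exports.
Local Open Scope classical_set_scope.
Local Open Scope ring_scope.

Section Defs.
Context {R : realType}.

Definition is_norm (d : nat) (N : 'rV[R]_d -> R) : Prop :=
  [/\ forall x y, N (x + y) <= N x + N y,
      forall (a : R) x, N (a *: x) = `|a| * N x,
      forall x, 0 <= N x
    & forall x, N x = 0 -> x = 0].

Definition smooth_wrt (d : nat) (f : 'rV[R]_d -> R) (Ns : 'rV[R]_d -> R) : Prop :=
  exists L : R, forall x, differentiable f x /\
    forall y, f y <= f x + ('d f x) (y - x) + L / 2 * Ns (y - x) ^+ 2.

(* the norm ||.||_m : 1/2 ||w||_m^2 = inf_u {1/2 ||u||^2 + 1/(2 xi) ||w-u||_s^2} *)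
Definition moreau_norm (d : nat) (N Ns : 'rV[R]_d -> R) (xi : R) (w : 'rV[R]_d) : R :=
  Num.sqrt (2 * inf (range (fun u : 'rV[R]_d =>
      N u ^+ 2 / 2 + Ns (w - u) ^+ 2 / (2 * xi)))).

Definition nat3 (t : nat) : R := t%:R + 3.

Definition lr_setup (Ca : R) (alpha T : nat -> R) : Prop :=
  (exists nu1 : R, 0 < nu1 < 1 /\
     (forall t, alpha t = Ca / nat3 t) /\
     (forall m, T m = Ca * (ln (nat3 m) `^ nu1) / nat3 m))
  \/
  (exists nu nu2 : R, 2 / 3 < nu < 1 /\ 1 / 2 < nu2 < nu / (2 - nu) /\
     (forall t, alpha t = Ca / (nat3 t `^ nu)) /\
     (forall m, T m = Ca / (nat3 m `^ nu2)))
  \/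
  (exists nu : R, 0 < nu < 1 /\
     (forall t, alpha t = Ca / (nat3 t * ln (nat3 t) `^ nu)) /\
     (forall m, T m = Ca / nat3 m)).

Definition is_anchors (alpha T : nat -> R) (tm : nat -> nat) : Prop :=
  tm 0%N = 0%N /\
  forall m, T m <= \sum_(tm m <= t < tm m.+1) alpha t /\
    forall k, T m <= \sum_(tm m <= t < k) alpha t -> (tm m.+1 <= k)%N.

Fixpoint iterates (d : nat) (Yt : Type) (H : 'rV[R]_d -> Yt -> 'rV[R]_d)
    (alpha : nat -> R) (w0 : 'rV[R]_d) (y : nat -> Yt) (t : nat) : 'rV[R]_d :=
  match t with
  | 0%N => w0
  | t'.+1 => let wt := iterates H alpha w0 y t' in
             wt + alpha t' *: (H wt (y t'.+1) - wt)
  end.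

Definition Gf (d : nat) (Yt : Type) (H : 'rV[R]_d -> Yt -> 'rV[R]_d) w y := H w y - w.

Definition z1 (d : nat) (Yt : Type) (H : 'rV[R]_d -> Yt -> 'rV[R]_d)
    (alpha : nat -> R) (w0 : 'rV[R]_d) (tm : nat -> nat) (y : nat -> Yt) (m : nat)
    : 'rV[R]_d :=
  let w := iterates H alpha w0 y in
  \sum_(tm m <= t < tm m.+1)
     alpha t *: (Gf H (w t) (y t.+1) - Gf H (w (tm m)) (y t.+1)).

Local Open Scope ereal_scope.

Fixpoint kpow (dY : measure_display) (Yt : measurableType dY)
    (P : R.-ker Yt ~> Yt) (n : nat) (y : Yt) (A : set Yt) : \bar R :=
  match n with
  | 0%N => \d_y A
  | n'.+1 => \int[P y]_z kpow P n' z A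
  end.

Definition stationary (dY : measure_display) (Yt : measurableType dY)
    (P : R.-ker Yt ~> Yt) (q : probability Yt R) : Prop :=
  forall A, measurable A -> q A = \int[q]_y P y A.

Definition markov_chain (dO : measure_display) (Om : measurableType dO)
    (Pr : probability Om R) (dY : measure_display) (Yt : measurableType dY)
    (P : R.-ker Yt ~> Yt) (Y : nat -> Om -> Yt) : Prop :=
  (forall t, measurable_fun setT (Y t)) /\
  forall (n : nat) (A : nat -> set Yt), (forall i, measurable (A i)) ->
    Pr [set om | forall i, (i <= n.+1)%N -> A i (Y i om)] =
    \int[Pr]_(om in [set om | forall i, (i <= n)%N -> A i (Y i om)]) P (Y n om) (A n.+1).

End Defs.

From HB Require Import structures.
From mathcomp Require Import all_boot all_order all_algebra.
From mathcomp Require Import all_classical all_reals all_analysis.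
From mathcomp Require Import lra ring.
Import Order.TTheory GRing.Theory Num.Theory.
Import numFieldNormedType.Exports.
Local Open Scope classical_set_scope.
Local Open Scope ring_scope.

(* Proof idea: on the window [t_m, t_{m+1}) the step sizes sum to some S <= 2 T_m. Since G is
   L-Lipschitz and grows at most affinely, the iterates move by at most 2 S (L |w_{t_m} - w*| + B)
   inside the window as long as L S <= 1/2, so every summand of z_{1,m} is at most alpha_t L times
   that displacement and |z_{1,m}| <= 2 L S^2 (L |w_{t_m} - w*| + B). Each of the three schedules
   satisfies alpha_t <= T_m for t >= m and (m + 3) T_m^2 <= 4 C_alpha^2, which gives S <= 2 T_m and,
   for m large, L S <= 1/2. Finally |.|_m <= |.|, and |.| <= k |.|_m by equivalence of norms on
   R^d. *)

Lemma mx_norm_coord_le (K : realDomainType) m n (x : 'M[K]_(m, n)) i j :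
  `|x i j| <= `|x|.
Proof.
rewrite [leRHS]/Num.Def.normr /= mx_normrE.
exact: (le_bigmax _ (fun ij : 'I_m * 'I_n => `|x ij.1 ij.2|) (i, j)).
Qed.

Section IsNorm.
Context {R : realType} {d : nat} {N : 'rV[R]_d -> R}.
Hypothesis hN : is_norm N.

Lemma is_normD x y : N (x + y) <= N x + N y. Proof. by case: hN. Qed.

Lemma is_normZ a x : N (a *: x) = `|a| * N x. Proof. by case: hN. Qed.

Lemma is_norm_ge0 x : 0 <= N x. Proof. by case: hN. Qed.

Lemma is_norm0 : N 0 = 0.
Proof. by rewrite -(scale0r 0) is_normZ normr0 mul0r. Qed.

Lemma is_normN x : N (- x) = N x.
Proof. by rewrite -scaleN1r is_normZ normrN normr1 mul1r. Qed.

Lemma is_norm_sum (I : Type) (r : seq I) (P : pred I) (F : I -> 'rV[R]_d) :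
  N (\sum_(i <- r | P i) F i) <= \sum_(i <- r | P i) N (F i).
Proof.
elim/big_rec2: _ => [|i y1 y2 _ Hy]; first by rewrite is_norm0.
exact: le_trans (is_normD _ _) (lerD (lexx _) Hy).
Qed.

Lemma is_norm_dist_dist x y : `|N x - N y| <= N (x - y).
Proof.
have := is_normD (x - y) y; have := is_normD (y - x) x.
have -> : N (y - x) = N (x - y) by rewrite -is_normN opprB.
rewrite !subrK ler_norml; lra.
Qed.

Lemma is_norm_le_mx_norm : exists2 c, 0 < c & forall x, N x <= c * `|x|.
Proof.
exists (\sum_(j < d) N (delta_mx 0 j) + 1).
  by rewrite ltr_wpDl // sumr_ge0 // => j _; exact: is_norm_ge0.
move=> x; rewrite {1}(row_sum_delta x).
apply: le_trans (is_norm_sum _ _ _ _) _.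
rewrite mulrDl mul1r ler_wpDr // mulr_suml; apply: ler_sum => j _.
by rewrite is_normZ mulrC ler_wpM2l ?is_norm_ge0 ?mx_norm_coord_le.
Qed.

Lemma is_norm_continuous : continuous N.
Proof.
have [c c0 Nc] := is_norm_le_mx_norm.
move=> x; apply/(@cvgrPdist_le _ _ _ (nbhs x) (nbhs_filter x)) => e e0.
apply/(@nbhs_normP R (matrix R 1 d) x); exists (e / c) => /=; first by rewrite divr_gt0.
move=> y /= xy; apply: le_trans (is_norm_dist_dist x y) _.
by apply: le_trans (Nc _) _; rewrite -ler_pdivlMl // mulrC ltW.
Qed.

Lemma is_norm_ge_mx_norm : exists2 a, 0 < a & forall x, a * `|x| <= N x.
Proof.
pose S := [set x : 'rV[R]_d | `|x| = 1].
have normalize x : x != 0 -> S (`|x|^-1 *: x).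
  by move=> x0; rewrite /S /= normrZ ger0_norm ?invr_ge0 // mulVf ?normr_eq0.
have [S0|S0] := pselect (S !=set0); last first.
  exists 1 => // x; have [->|x0] := eqVneq x 0; first by rewrite normr0 mulr0 is_norm0.
  by exfalso; apply: S0; exists (`|x|^-1 *: x); exact: normalize.
have S_compact : compact S.
  apply: bounded_closed_compact.
    apply: filterS (@nbhs_pinfty_ge R 1 _) => [M M1 x /= ->//|]; exact: num_real.
  rewrite (_ : S = (fun x => `|x|) @^-1` [set 1]) //.
  by apply: preimage_closed => [x _|]; [exact: norm_continuous | exact: closed_eq].
have [c Sc Nc] := EVT_min_rV S0 S_compact (continuous_subspaceT is_norm_continuous).
have c1 : `|c| = 1 by move: Sc; rewrite inE.
exists (N c).
  have [_ _ _ N_eq0] := hN.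
  rewrite lt_def is_norm_ge0 andbT; apply/eqP => /N_eq0 c0.
  by move: c1; rewrite c0 normr0 => /eqP; rewrite eq_sym oner_eq0.
move=> x; have [->|x0] := eqVneq x 0; first by rewrite normr0 mulr0 is_norm0.
have := Nc _ (mem_set (normalize x x0)).
rewrite is_normZ ger0_norm ?invr_ge0 // => Ncx.
by rewrite -ler_pdivlMr ?normr_gt0 // mulrC.
Qed.

End IsNorm.

Lemma is_norm_dominated {R : realType} {d : nat} {N N' : 'rV[R]_d -> R} :
  is_norm N -> is_norm N' -> exists2 b, 0 < b & forall x, N x <= b * N' x.
Proof.
move=> hN hN'.
have [c c0 Nc] := is_norm_le_mx_norm hN.
have [a a0 N'a] := is_norm_ge_mx_norm hN'.
exists (c / a); first by rewrite divr_gt0.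
move=> x; apply: le_trans (Nc x) _.
by rewrite -mulrA ler_pM2l // ler_pdivlMl // mulrC.
Qed.

Section MoreauNorm.
Context {R : realType} {d : nat} {N Ns : 'rV[R]_d -> R} {xi : R}.
Hypotheses (hN : is_norm N) (hNs : is_norm Ns) (xi_gt0 : 0 < xi).

Let envelope w u := N u ^+ 2 / 2 + Ns (w - u) ^+ 2 / (2 * xi).

Let envelope_ge0 w u : 0 <= envelope w u.
Proof. by rewrite addr_ge0 // divr_ge0 // ?sqr_ge0 // mulr_ge0 // ltW. Qed.

Let envelope_lbound w : has_lbound (range (envelope w)).
Proof. by exists 0 => _ [u _ <-]; exact: envelope_ge0. Qed.

Lemma moreau_norm_ge0 w : 0 <= moreau_norm N Ns xi w.
Proof. exact: sqrtr_ge0. Qed.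

Lemma moreau_norm_sqr w :
  moreau_norm N Ns xi w ^+ 2 = 2 * inf (range (envelope w)).
Proof.
rewrite sqr_sqrtr // mulr_ge0 // lb_le_inf //; first by exists (envelope w 0), 0.
by move=> _ [u _ <-]; exact: envelope_ge0.
Qed.

Lemma moreau_norm_le w : moreau_norm N Ns xi w <= N w.
Proof.
rewrite -ler_sqr ?nnegrE ?moreau_norm_ge0 ?(is_norm_ge0 hN) // moreau_norm_sqr.
have := ge_inf (envelope_lbound w) (ex_intro2 _ _ w I erefl).
rewrite {2}/envelope subrr (is_norm0 hNs) expr0n /= mul0r addr0.
lra.
Qed.

Lemma le_moreau_norm :
  exists2 k, 0 < k & forall w, N w <= k * moreau_norm N Ns xi w.
Proof.
have [b b_gt0 Nb] := is_norm_dominated hN hNs.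
pose K := 2 + 2 * b ^+ 2 * xi.
have K_gt0 : 0 < K by have := mulr_ge0 (sqr_ge0 b) (ltW xi_gt0); rewrite /K; lra.
exists (Num.sqrt K); first by rewrite sqrtr_gt0.
move=> w; suff Nw2 : N w ^+ 2 <= K * moreau_norm N Ns xi w ^+ 2.
  rewrite -(ger0_norm (is_norm_ge0 hN w)) -(ger0_norm (moreau_norm_ge0 w)).
  by rewrite -!sqrtr_sqr -sqrtrM ?(ltW K_gt0) // ler_sqrt // mulr_ge0 ?sqr_ge0 // ltW.
rewrite moreau_norm_sqr mulrA -ler_pdivrMl ?mulr_gt0 //.
apply: lb_le_inf => [|_ [u _ <-]]; first by exists (envelope w 0), 0.
rewrite ler_pdivrMl ?mulr_gt0 // /envelope.
have Nw : N w <= N u + b * Ns (w - u).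
  by apply: le_trans (lerD (lexx _) (Nb _)); rewrite -{1}(subrK u w) addrC is_normD.
set p := N u; set q := Ns (w - u).
have [p_ge0 q_ge0] : 0 <= p /\ 0 <= q by split; apply: is_norm_ge0.
(* [(p + b q)^2 <= 2 p^2 + 2 b^2 q^2] and [K] is large enough to absorb both terms. *)
have -> : K * 2 * (p ^+ 2 / 2 + q ^+ 2 / (2 * xi))
    = 2 * p ^+ 2 + 2 * b ^+ 2 * q ^+ 2 + (2 * b ^+ 2 * xi * p ^+ 2 + 2 / xi * q ^+ 2).
  by rewrite /K; field; rewrite gt_eqF.
have extra_ge0 : 0 <= 2 * b ^+ 2 * xi * p ^+ 2 + 2 / xi * q ^+ 2.
  by rewrite addr_ge0 // !mulr_ge0 // ?sqr_ge0 ?invr_ge0 // ltW.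
have := sqr_ge0 (p - b * q).
have : N w ^+ 2 <= (p + b * q) ^+ 2.
  by rewrite ler_sqr ?nnegrE ?(is_norm_ge0 hN) // addr_ge0 // mulr_ge0 // ltW.
nra.
Qed.

End MoreauNorm.

Section LearningRates.
Context {R : realType}.

Lemma expR1_lt3 : expR 1 < 3 :> R.
Proof.
(* [expR (-1) = expR (-1/6) ^+ 6 >= (5/6) ^+ 6 > 1/3] *)
have e56 : 5 / 6 <= expR (- (1 / 6)) :> R by have := expR_ge1Dx (- (1 / 6) : R); lra.
have : (5 / 6) ^+ 6 <= expR (- 1) :> R.
  rewrite (_ : -1 = 6%:R * - (1 / 6)); last by field.
  by rewrite expRM_natl lerXn2r ?nnegrE ?expR_ge0 //; lra.
have c_gt : 1 / 3 < (5 / 6) ^+ 6 :> R by rewrite !exprS expr0; lra.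
rewrite expRN => h; have e_gt0 := expR_gt0 (1 : R).
have := ler_wpM2r (ltW e_gt0) h; rewrite mulVf ?gt_eqF // => ce.
nra.
Qed.

Lemma nat3_ge3 t : 3 <= nat3 t :> R.
Proof. by rewrite /nat3 lerDr. Qed.

Lemma nat3_ge1 t : 1 <= nat3 t :> R.
Proof. by apply: le_trans (nat3_ge3 t); lra. Qed.

Lemma nat3_gt0 t : 0 < nat3 t :> R.
Proof. exact: lt_le_trans ltr01 (nat3_ge1 t). Qed.

Lemma ler_nat3 {m t : nat} : (m <= t)%N -> nat3 m <= nat3 t :> R.
Proof. by move=> mt; rewrite /nat3 lerD2r ler_nat. Qed.

Lemma ln_nat3_ge1 t : 1 <= ln (nat3 t : R).
Proof.
rewrite -[leLHS](expRK 1) ler_ln ?posrE ?expR_gt0 ?nat3_gt0 //.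
exact: ltW (lt_le_trans expR1_lt3 (nat3_ge3 t)).
Qed.

Lemma powR_ln_nat3_ge1 t r : 0 <= r -> 1 <= ln (nat3 t) `^ r :> R.
Proof. by move=> r_ge0; rewrite -(powRr0 (ln (nat3 t))) ler_powR ?ln_nat3_ge1. Qed.

Lemma ln_le_2sqrt {x : R} : 0 < x -> ln x <= 2 * Num.sqrt x.
Proof.
move=> x_gt0; have sx_gt0 : 0 < Num.sqrt x by rewrite sqrtr_gt0.
rewrite -[in ln x](sqr_sqrtr (ltW x_gt0)) expr2 lnM ?posrE //.
by have := ln_sublinear sx_gt0; lra.
Qed.

Lemma ler_pdiv2l {c x y : R} : 0 <= c -> 0 < x -> x <= y -> c / y <= c / x.
Proof. by move=> c_ge0 x_gt0 xy; rewrite ler_wpM2l // lef_pV2 ?posrE // (lt_le_trans x_gt0). Qed.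

Definition admissible_rates (Ca : R) (alpha T : nat -> R) :=
  [/\ forall t, 0 < alpha t, forall m, 0 < T m,
      forall m t, (m <= t)%N -> alpha t <= T m
    & forall m, T m ^+ 2 * nat3 m <= 4 * Ca ^+ 2].

Section Setups.
Context {Ca : R} {alpha T : nat -> R}.
Hypothesis Ca_gt0 : 0 < Ca.

Lemma admissible_rates_a {nu1 : R} : 0 < nu1 < 1 ->
  (forall t, alpha t = Ca / nat3 t) ->
  (forall m, T m = Ca * (ln (nat3 m) `^ nu1) / nat3 m) ->
  admissible_rates Ca alpha T.
Proof.
move=> /andP[nu1_gt0 nu1_lt1] alphaE TE.
have lnp_ge1 m : 1 <= ln (nat3 m) `^ nu1 :> R by exact: powR_ln_nat3_ge1 (ltW nu1_gt0).
split=> [t|m|m t mt|m]; rewrite ?alphaE ?TE.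
- by rewrite divr_gt0 ?nat3_gt0.
- by rewrite divr_gt0 ?nat3_gt0 // mulr_gt0 // (lt_le_trans ltr01).
- apply: le_trans (ler_pdiv2l (ltW Ca_gt0) (nat3_gt0 m) (ler_nat3 mt)) _.
  by rewrite ler_wpM2r ?invr_ge0 ?(ltW (nat3_gt0 m)) // ler_peMr ?(ltW Ca_gt0).
- set x := nat3 m; set p := ln x `^ nu1.
  have x_gt0 : 0 < x := nat3_gt0 m.
  have p2 : p ^+ 2 <= 4 * x.
    have -> : 4 * x = (2 * Num.sqrt x) ^+ 2 by rewrite exprMn sqr_sqrtr ?(ltW x_gt0) //; ring.
    rewrite ler_sqr ?nnegrE ?powR_ge0 ?mulr_ge0 ?sqrtr_ge0 //.
    apply: le_trans _ (ln_le_2sqrt x_gt0).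
    by apply: ler1_powR; [exact: ln_nat3_ge1 | exact: ltW].
  have -> : (Ca * p / x) ^+ 2 * x = Ca ^+ 2 * (p ^+ 2 / x) by field; rewrite gt_eqF.
  by rewrite [4 * _]mulrC ler_wpM2l ?sqr_ge0 // ler_pdivrMr.
Qed.

Lemma admissible_rates_b {nu nu2 : R} : 2 / 3 < nu < 1 -> 1 / 2 < nu2 < nu / (2 - nu) ->
  (forall t, alpha t = Ca / (nat3 t `^ nu)) ->
  (forall m, T m = Ca / (nat3 m `^ nu2)) ->
  admissible_rates Ca alpha T.
Proof.
move=> /andP[nu_gt nu_lt1] /andP[nu2_gt nu2_lt] alphaE TE.
have nu2_le_nu : nu2 <= nu.
  by apply: le_trans (ltW nu2_lt) _; rewrite ler_pdivrMr; [nra | lra].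
split=> [t|m|m t mt|m]; rewrite ?alphaE ?TE.
- by rewrite divr_gt0 ?powR_gt0 ?nat3_gt0.
- by rewrite divr_gt0 ?powR_gt0 ?nat3_gt0.
- apply: ler_pdiv2l (ltW Ca_gt0) (powR_gt0 _ (nat3_gt0 m)) _.
  apply: le_trans (ler_powR (nat3_ge1 m) nu2_le_nu) _.
  by apply: ge0_ler_powR; rewrite ?nnegrE ?(ltW (nat3_gt0 _)) ?ler_nat3 //; lra.
- set x := nat3 m.
  have x_ge1 : 1 <= x := nat3_ge1 m.
  have xp_gt0 : 0 < x `^ nu2 by rewrite powR_gt0 // nat3_gt0.
  have x_le : x <= (x `^ nu2) ^+ 2.
    have -> : (x `^ nu2) ^+ 2 = x `^ (nu2 * 2) by rewrite powRrM powR_mulrn ?powR_ge0.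
    by rewrite le1r_powR //; lra.
  have -> : (Ca / x `^ nu2) ^+ 2 * x = Ca ^+ 2 * (x / (x `^ nu2) ^+ 2).
    by field; rewrite gt_eqF.
  rewrite [4 * _]mulrC ler_wpM2l ?sqr_ge0 // ler_pdivrMr ?exprn_gt0 //; lra.
Qed.

Lemma admissible_rates_c {nu : R} : 0 < nu < 1 ->
  (forall t, alpha t = Ca / (nat3 t * ln (nat3 t) `^ nu)) ->
  (forall m, T m = Ca / nat3 m) ->
  admissible_rates Ca alpha T.
Proof.
move=> /andP[nu_gt0 _] alphaE TE.
have lnp_ge1 t : 1 <= ln (nat3 t) `^ nu :> R by exact: powR_ln_nat3_ge1 (ltW nu_gt0).
split=> [t|m|m t mt|m]; rewrite ?alphaE ?TE.
- by rewrite divr_gt0 // mulr_gt0 ?nat3_gt0 // (lt_le_trans ltr01).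
- by rewrite divr_gt0 ?nat3_gt0.
- apply: ler_pdiv2l (ltW Ca_gt0) (nat3_gt0 m) _.
  by apply: le_trans (ler_nat3 mt) _; rewrite ler_peMr ?(ltW (nat3_gt0 t)).
- have x_ge1 := nat3_ge1 m; have x_gt0 := nat3_gt0 m.
  have -> : (Ca / nat3 m) ^+ 2 * nat3 m = Ca ^+ 2 / nat3 m by field; rewrite gt_eqF.
  rewrite ler_pdivrMr //; have := sqr_ge0 Ca; nra.
Qed.

End Setups.

Lemma lr_setup_admissible {Ca : R} {alpha T : nat -> R} : 0 < Ca -> lr_setup Ca alpha T ->
  admissible_rates Ca alpha T.
Proof.
move=> Ca_gt0 [[nu1 [nu1P [alphaE TE]]] |
  [[nu [nu2 [nuP [nu2P [alphaE TE]]]]] | [nu [nuP [alphaE TE]]]]].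
- exact (admissible_rates_a Ca_gt0 nu1P alphaE TE).
- exact (admissible_rates_b Ca_gt0 nuP nu2P alphaE TE).
- exact (admissible_rates_c Ca_gt0 nuP alphaE TE).
Qed.

Lemma admissible_rates_small {Ca eps : R} {alpha T : nat -> R} :
  admissible_rates Ca alpha T -> 0 < eps ->
  exists m0, forall m, (m0 <= m)%N -> T m <= eps.
Proof.
move=> [_ T_gt0 _ T_sqr_le] eps_gt0.
exists (Num.truncn (4 * Ca ^+ 2 / eps ^+ 2)) => m m0m.
have x_gt : 4 * Ca ^+ 2 / eps ^+ 2 < nat3 m.
  apply: lt_le_trans (truncnS_gt _) _.
  by rewrite -natr1 /nat3 lerD ?ler_nat //; lra.
rewrite ltr_pdivrMr ?exprn_gt0 // in x_gt.
have : T m ^+ 2 * nat3 m < eps ^+ 2 * nat3 m.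
  by apply: le_lt_trans (T_sqr_le m) _; rewrite [_ * nat3 m]mulrC.
rewrite ltr_pM2r ?nat3_gt0 // => T_lt_eps.
by rewrite -ler_sqr ?nnegrE ?(ltW (T_gt0 m)) ?(ltW eps_gt0) ?(ltW T_lt_eps).
Qed.

End LearningRates.

Section LipschitzField.
Context {R : realType} {d : nat} {Yt : Type} {N : 'rV[R]_d -> R}.
Context {H : 'rV[R]_d -> Yt -> 'rV[R]_d} {Lh : R}.
Hypotheses (hN : is_norm N)
  (H_lip : forall v v' z, N (H v z - H v' z) <= Lh * N (v - v')).

Let H_lip_abs v v' z : N (H v z - H v' z) <= `|Lh| * N (v - v').
Proof. by apply: le_trans (H_lip v v' z) _; rewrite ler_wpM2r ?is_norm_ge0 ?ler_norm. Qed.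

Lemma Gf_lipschitz v v' z :
  N (Gf H v z - Gf H v' z) <= (`|Lh| + 1) * N (v - v').
Proof.
rewrite /Gf opprD addrACA -opprD mulrDl mul1r.
by apply: le_trans (is_normD hN _ _) _; rewrite is_normN // lerD2r H_lip_abs.
Qed.

Lemma Gf_bounded {B : R} : (forall z, N (H 0 z) <= B) ->
  forall v z, N (Gf H v z) <= `|Lh| * N v + B + N v.
Proof.
move=> H0_le v z; rewrite /Gf -(subrK (H 0 z) (H v z)).
apply: le_trans (is_normD hN _ _) _; rewrite is_normN // lerD2r.
apply: le_trans (is_normD hN _ _) _; apply: lerD (H0_le z).
by have := H_lip_abs v 0 z; rewrite subr0.
Qed.

End LipschitzField.

Section Iterates.
Context {R : realType} {d : nat} {Yt : Type} {N : 'rV[R]_d -> R}.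
Context {H : 'rV[R]_d -> Yt -> 'rV[R]_d} {alpha : nat -> R}.
Context {w0 wstar : 'rV[R]_d} {y : nat -> Yt} {L B : R}.
Hypotheses (hN : is_norm N) (alpha_ge0 : forall t, 0 <= alpha t) (L_ge0 : 0 <= L)
  (G_lip : forall v v' z, N (Gf H v z - Gf H v' z) <= L * N (v - v'))
  (G_star : forall z, N (Gf H wstar z) <= B).

Local Notation w := (iterates H alpha w0 y).
Local Notation S a t := (\sum_(a <= s < t) alpha s).

Let B_ge0 : 0 <= B := le_trans (is_norm_ge0 hN _) (G_star (y 0%N)).

Lemma iterates_sub a t : (a <= t)%N ->
  w t - w a = \sum_(a <= s < t) alpha s *: Gf H (w s) (y s.+1).
Proof.
move=> at_; rewrite -telescope_sumr //; apply: eq_bigr => s _.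
by rewrite /= addrAC subrr add0r.
Qed.

Lemma Gf_le v v' z :
  N (Gf H v z) <= L * N (v - v') + (L * N (v' - wstar) + B).
Proof.
have := is_normD hN (Gf H v z - Gf H wstar z) (Gf H wstar z); rewrite subrK.
have := is_normD hN (v - v') (v' - wstar); rewrite addrA subrK => /(ler_wpM2l L_ge0).
have := G_lip v wstar z; have := G_star z; lra.
Qed.

Lemma partial_sum_le a s b : (a <= s <= b)%N -> S a s <= S a b.
Proof.
case/andP=> as_ sb; rewrite [leRHS](big_cat_nat as_ sb) /= lerDl.
by rewrite sumr_ge0.
Qed.

Lemma iterates_drift a b t : L * S a b <= 1 / 2 -> (a <= t <= b)%N ->
  N (w t - w a) <= 2 * S a t * (L * N (w a - wstar) + B).
Proof.
move=> LS; set E := L * N (w a - wstar) + B.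
have E_ge0 : 0 <= E by rewrite addr_ge0 // mulr_ge0 // is_norm_ge0.
elim/ltn_ind: t => t IH /andP[at_ tb].
rewrite iterates_sub //; apply: le_trans (is_norm_sum hN _ _ _ _) _.
rewrite (_ : 2 * _ * E = \sum_(a <= s < t) alpha s * (2 * E)); last first.
  by rewrite -mulr_suml mulrCA mulrA.
apply: ler_sum_nat => s /andP[as_ st]; rewrite is_normZ // ger0_norm //.
apply: ler_wpM2l => //; apply: le_trans (Gf_le _ (w a) _) _.
have sb : (s <= b)%N := ltnW (leq_trans st tb).
have := IH s st; rewrite as_ sb => /(_ isT) drift_s.
have LSs : L * S a s <= 1 / 2.
  by apply: le_trans LS; rewrite ler_wpM2l // partial_sum_le // as_.
have := ler_wpM2l L_ge0 drift_s.
have : 0 <= (1 / 2 - L * S a s) * E by rewrite mulr_ge0 // subr_ge0.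
rewrite -/E; nra.
Qed.

Lemma drift_deviation_le {a b : nat} : (a <= b)%N -> L * S a b <= 1 / 2 ->
  N (\sum_(a <= t < b) alpha t *: (Gf H (w t) (y t.+1) - Gf H (w a) (y t.+1)))
  <= 2 * L * S a b ^+ 2 * (L * N (w a - wstar) + B).
Proof.
move=> ab LS; set E := L * N (w a - wstar) + B.
apply: le_trans (is_norm_sum hN _ _ _ _) _.
rewrite (_ : 2 * _ * _ * E = \sum_(a <= t < b) alpha t * (L * (2 * S a b * E))); last first.
  by rewrite -mulr_suml; ring.
apply: ler_sum_nat => t /andP[at_ tb]; rewrite is_normZ // ger0_norm //.
apply: ler_wpM2l => //; apply: le_trans (G_lip _ _ _) _; rewrite ler_wpM2l //.
apply: le_trans (iterates_drift _ _ t LS _) _; first by rewrite at_ ltnW.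
rewrite ler_wpM2r ?ler_wpM2l ?addr_ge0 ?mulr_ge0 ?is_norm_ge0 //.
by rewrite partial_sum_le // at_ ltnW.
Qed.

End Iterates.

Section Anchors.
Context {R : realType} {alpha T : nat -> R} {tm : nat -> nat}.
Hypotheses (T_gt0 : forall m, 0 < T m)
  (alpha_le_T : forall m t, (m <= t)%N -> alpha t <= T m)
  (anchors : is_anchors alpha T tm).

Lemma anchors_lt m : (tm m < tm m.+1)%N.
Proof.
have [_ /(_ m) [T_le _]] := anchors; rewrite ltnNge; apply/negP => le_tm.
by move: T_le; rewrite big_geq // => /(lt_le_trans (T_gt0 m)); rewrite ltxx.
Qed.

Lemma anchors_ge m : (m <= tm m)%N.
Proof. by elim: m => // m IH; exact: leq_ltn_trans IH (anchors_lt m). Qed.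

Lemma anchor_sum_le m : \sum_(tm m <= t < tm m.+1) alpha t <= 2 * T m.
Proof.
have [_ /(_ m) [_ tm_min]] := anchors.
have lt_tm := anchors_lt m.
have tmSE : tm m.+1 = (tm m.+1).-1.+1 by rewrite prednK // (leq_ltn_trans _ lt_tm).
set k := (tm m.+1).-1 in tmSE *.
have le_k : (tm m <= k)%N by rewrite -ltnS -tmSE.
rewrite tmSE big_nat_recr //=.
(* [tm m.+1] is minimal, so dropping its last step leaves a sum below [T m]. *)
have sum_lt : \sum_(tm m <= t < k) alpha t < T m.
  by rewrite ltNge; apply/negP => /tm_min; rewrite tmSE ltnn.
have := alpha_le_T m k (leq_trans (anchors_ge m) le_k); lra.
Qed.

End Anchors.

Section Window.
Context {R : realType} {d : nat} {Yt : Type} {N : 'rV[R]_d -> R}.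
Context {H : 'rV[R]_d -> Yt -> 'rV[R]_d} {alpha T : nat -> R} {tm : nat -> nat}.
Context {w0 wstar : 'rV[R]_d} {y : nat -> Yt} {L B : R}.
Hypotheses (hN : is_norm N) (L_ge0 : 0 <= L)
  (G_lip : forall v v' z, N (Gf H v z - Gf H v' z) <= L * N (v - v'))
  (G_star : forall z, N (Gf H wstar z) <= B)
  (alpha_gt0 : forall t, 0 < alpha t) (T_gt0 : forall m, 0 < T m)
  (alpha_le_T : forall m t, (m <= t)%N -> alpha t <= T m)
  (anchors : is_anchors alpha T tm).

Lemma z1_le m : 4 * L * T m <= 1 ->
  N (z1 H alpha w0 tm y m)
  <= 8 * L * T m ^+ 2 * (L * N (iterates H alpha w0 y (tm m) - wstar) + B).
Proof.
move=> LT; have S_le := anchor_sum_le T_gt0 alpha_le_T anchors m.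
set S := \sum_(_ <= _ < _) _ in S_le.
have S_ge0 : 0 <= S by rewrite sumr_ge0 // => t _; exact: ltW.
have LS : L * S <= 1 / 2 by have := ler_wpM2l L_ge0 S_le; lra.
have alpha_ge0 t : 0 <= alpha t := ltW (alpha_gt0 t).
have B_ge0 : 0 <= B := le_trans (is_norm_ge0 hN _) (G_star (y 0%N)).
rewrite /z1 /=; apply: le_trans (drift_deviation_le hN alpha_ge0 L_ge0 G_lip G_star
  (ltnW (anchors_lt T_gt0 anchors m)) LS) _.
rewrite -/S (_ : 8 * L * _ = 2 * L * (2 * T m) ^+ 2); last by ring.
rewrite ler_wpM2r ?addr_ge0 ?mulr_ge0 ?is_norm_ge0 // ler_wpM2l ?mulr_ge0 //.
by rewrite ler_sqr ?nnegrE // mulr_ge0 // ltW.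
Qed.

End Window.

Theorem lemma5 (R : realType) (d : nat)
  (dO : measure_display) (Om : measurableType dO) (Pr : probability Om R)
  (dY : measure_display) (Yt : measurableType dY)
  (P : R.-ker Yt ~> Yt) (dYd : probability Yt R) (CA rho : R)
  (Y : nat -> Om -> Yt)
  (H : 'rV[R]_d -> Yt -> 'rV[R]_d) (h : 'rV[R]_d -> 'rV[R]_d)
  (N Ns : 'rV[R]_d -> R) (xi kappa Lh : R) (wstar w0 : 'rV[R]_d)
  (Ca : R) (alpha T : nat -> R) (tm : nat -> nat) :
  (* Markov chain with transition kernel P *)
  markov_chain Pr P Y ->
  (forall y, P y setT = 1%E) ->
  (* unique stationary distribution dYd *)
  stationary P dYd ->
  (forall q : probability Yt R, stationary P q ->
     forall A, measurable A -> q A = dYd A) ->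
  (* geometric mixing: int |P^n(y,.) - dYd| = 2 sup_A |P^n(y,A) - dYd(A)| <= CA rho^n *)
  0 <= rho < 1 ->
  (forall y n A, measurable A ->
     (2%:E * `| kpow P n y A - dYd A | <= (CA * rho ^+ n)%:E)%E) ->
  (* h(w) = E_{y ~ dYd}[H(w,y)] *)
  (forall w i, measurable_fun setT (fun y => H w y 0 i)) ->
  (forall w i, (h w 0 i)%:E = (\int[dYd]_y (H w y 0 i)%:E)%E) ->
  (* contraction of h w.r.t. the norm N, fixed point wstar *)
  is_norm N -> 0 <= kappa < 1 ->
  (forall w w', N (h w - h w') <= kappa * N (w - w')) ->
  h wstar = wstar ->
  (* Lipschitz H, bounded H(0,.) *)
  (forall w w' y, N (H w y - H w' y) <= Lh * N (w - w')) ->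
  (exists B : R, forall y, N (H 0 y) <= B) ->
  (* the smoothing norm Ns and xi > 0 *)
  is_norm Ns -> smooth_wrt (fun x => Ns x ^+ 2 / 2) Ns -> 0 < xi ->
  (* learning rates and anchors *)
  0 < Ca -> lr_setup Ca alpha T -> is_anchors alpha T tm ->
  exists C : R, exists m0 : nat, forall (om : Om) (m : nat), (m0 <= m)%N ->
    moreau_norm N Ns xi (z1 H alpha w0 tm (fun t => Y t om) m)
      <= T m ^+ 2 * C *
         (moreau_norm N Ns xi (iterates H alpha w0 (fun t => Y t om) (tm m) - wstar) + 1).
Proof.
move=> _ _ _ _ _ _ _ _ hN _ _ _ H_lip [B H0_le] hNs _ xi_gt0 Ca_gt0 setup anchors.
have rates := lr_setup_admissible Ca_gt0 setup.
have [alpha_gt0 T_gt0 alpha_le_T _] := rates.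
have [k k_gt0 N_le_moreau] := le_moreau_norm hN hNs xi_gt0.
set L := `|Lh| + 1; set Bs := `|Lh| * N wstar + B + N wstar.
have L_gt0 : 0 < L by rewrite ltr_wpDl.
have eps_gt0 : 0 < (4 * L)^-1 by rewrite invr_gt0 mulr_gt0.
have [m0 T_small] := admissible_rates_small rates eps_gt0.
exists (8 * L * (L * k + Bs)), m0 => om m m0_le_m; set y := fun t => Y t om.
have G_star z : N (Gf H wstar z) <= Bs := Gf_bounded hN H_lip H0_le wstar z.
have Bs_ge0 : 0 <= Bs := le_trans (is_norm_ge0 hN _) (G_star (y 0%N)).
have LT : 4 * L * T m <= 1.
  by rewrite -ler_pdivlMl ?mulr_gt0 // mulr1; exact: T_small.
apply: le_trans (moreau_norm_le hN hNs xi_gt0 _) _.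
apply: le_trans (z1_le hN (ltW L_gt0) (Gf_lipschitz hN H_lip) G_star
  alpha_gt0 T_gt0 alpha_le_T anchors m LT) _.
set e := iterates H alpha w0 y (tm m) - wstar; set mo := moreau_norm N Ns xi e.
have Ne_le : N e <= k * mo := N_le_moreau e.
have mo_ge0 : 0 <= mo := moreau_norm_ge0 e.
rewrite [leRHS](_ : _ = 8 * L * T m ^+ 2 * ((L * k + Bs) * (mo + 1))); last by ring.
rewrite ler_wpM2l ?mulr_ge0 ?(ltW L_gt0) ?(ltW (T_gt0 m)) //.
have := ler_wpM2l (ltW L_gt0) Ne_le; have := mulr_ge0 (ltW L_gt0) (ltW k_gt0).
have := mulr_ge0 Bs_ge0 mo_ge0; lra.
Qed.
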